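(* In the elastoplastic setting described in the context, let $(\mathbf{a}^*,\mathbf{b}^*,\mathbf{c}^* )$ be the solution of $\mathbf{F}(\mathbf{a}^*,\mathbf{b}^*,\mathbf{c}^* )=\mathbf{0}$, and let $\mathbf{H}^*\in\partial\mathbf{F}(\mathbf{a}^*,\mathbf{b}^*,\mathbf{c}^* )$ with diagonal blocks $\mathbf{X}_i,\mathbf{Y}_i\in\mathbb{R}^{L\times L}$ ($i=1,\dots,N$) of its last block row, which are of the form $$\mathbf{X}_i=\tau_i\varrho\,\mathbf{c}^*_i\otimes\frac{\mathbf{v}^*_{\varrho,i}}{|\mathbf{v}^*_{\varrho,i}|}-\varrho\sigma_i\mathbf{I}_{L\times L},\qquad \mathbf{Y}_i=\tau_i\Big(\mathbf{c}^*_i\otimes\frac{\mathbf{v}^*_{\varrho,i}}{|\mathbf{v}^*_{\varrho,i}|}+(|\mathbf{v}^*_{\varrho,i}|-\sigma_i)\mathbf{I}_{L\times L}\Big)$$ with $\tau_i\in[0,1]$, $\tau_i=0$ if $|\mathbf{v}^*_{\varrho,i}|<\sigma_i$ and $\tau_i=1$ if $|\mathbf{v}^*_{\varrho,i}|>\sigma_i$, where $\mathbf{v}^*_{\varrho,i}=\mathbf{c}^*_i+\varrho\mathbf{b}^*_i$. Then for every $i\in\{1,\dots,N\}$ the pair $(\mathbf{X}_i,\mathbf{Y}_i)$ is eigencomplementary.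
   Context: Elastoplastic setting. Let $d\in\{2,3\}$, $\Omega\subset\mathbb{R}^d$ a bounded polygonal domain with Lipschitz boundary $\Gamma$, $\Gamma_D\subseteq\Gamma$ closed with positive surface measure, $\Gamma_N=\Gamma\setminus\Gamma_D$. $\mathbb{S}_{d,0}$ denotes the symmetric trace-free $d\times d$ matrices with Frobenius inner product. $\mathbb{C},\mathbb{H}$ are fourth-order elasticity and hardening tensors with the usual symmetries, uniformly elliptic and bounded; $\sigma_y>0$ constant. $V=\{\mathbf{v}\in H^1(\Omega,\mathbb{R}^d):\mathbf{v}|_{\Gamma_D}=\mathbf{0}\}$, $\mathbf{f}\in V^*$, $\mathbf{g}\in H^{-1/2}(\Gamma_N,\mathbb{R}^d)$, $\ell(\mathbf{v})=\langle\mathbf{f},\mathbf{v}\rangle+\langle\mathbf{g},\mathbf{v}\rangle_{\Gamma_N}$, $a((\mathbf{u},\mathbf{p}),(\mathbf{v},\mathbf{q}))=\int_\Omega\mathbb{C}(\boldsymbol\varepsilon(\mathbf{u})-\mathbf{p}):(\boldsymbol\varepsilon(\mathbf{v})-\mathbf{q})+\int_\Omega\mathbb{H}\mathbf{p}:\mathbf{q}$, $\boldsymbol\varepsilon(\mathbf{u})=\tfrac12(\nabla\mathbf{u}+\nabla\mathbf{u}^\top)$. $\mathcal{T}_h$ is a locally quasi-uniform mesh of convex shape-regular quadrilaterals/hexahedra with bi/trilinear bijections $\mathbf{M}_T:[-1,1]^d\to T$ and degrees $p_T\ge1$; $\mathbb{P}_p(\hat T)$ are polynomials of degree $\le p$ in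 each variable. $V_{hp}=\{\mathbf{v}\in V:\mathbf{v}|_T\circ\mathbf{M}_T\in\mathbb{P}_{p_T}(\hat T)^d\}$ with basis $\{\mathbf{e}_k\vartheta_i:k\le d,i\le M\}$. For each $T$, $\hat{\mathbf{x}}_{k,T}$ ($k\le n_T:=p_T^d$) are the tensor Gauss points and $\hat\phi_{k,T}\in\mathbb{P}_{p_T-1}(\hat T)$ the Lagrange basis at them; $\phi_1,\dots,\phi_N$ ($N=\sum_Tn_T$) equal $\hat\phi_{k,T}\circ\mathbf{M}_T^{-1}$ on $T$, $0$ elsewhere. $D_i=\int_\Omega\phi_i>0$, $\sigma_i=D_i^{-1}\int_\Omega\sigma_y\phi_i$. $L=\tfrac12(d-1)(d+2)$, $\boldsymbol\Phi_1,\dots,\boldsymbol\Phi_L$ a Frobenius-orthonormal basis of $\mathbb{S}_{d,0}$ (for $d=2$: $\tfrac1{\sqrt2}\operatorname{diag}(1,-1)$, $\tfrac1{\sqrt2}(\mathbf{e}_1\mathbf{e}_2^\top+\mathbf{e}_2\mathbf{e}_1^\top)$; for $d=3$: $\tfrac1{\sqrt2}\operatorname{diag}(1,-1,0)$, $\tfrac1{\sqrt6}\operatorname{diag}(1,1,-2)$, $\tfrac1{\sqrt2}(\mathbf{e}_j\mathbf{e}_k^\top+\mathbf{e}_k\mathbf{e}_j^\top)$ for $(j,k)=(1,2),(1,3),(2,3)$). Matrices: $A_{d(i-1)+k,d(j-1)+l}=a((\mathbf{e}_l\vartheta_j,\mathbf{0}),(\mathbf{e}_k\vartheta_i,\mathbf{0}))$;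 $C_{L(i-1)+k,L(j-1)+l}=a((\mathbf{0},\boldsymbol\Phi_l\phi_i),(\mathbf{0},\boldsymbol\Phi_k\phi_j))$; $\mathbf{D}=\operatorname{diag}(D_1\mathbf{I}_{L\times L},\dots,D_N\mathbf{I}_{L\times L})$; $B_{d(i-1)+k,L(j-1)+l}=-a((\mathbf{0},\boldsymbol\Phi_l\phi_j),(\mathbf{e}_k\vartheta_i,\mathbf{0}))$; $l_{d(i-1)+k}=-\ell(\mathbf{e}_k\vartheta_i)$. Fix $\varrho>0$. For $\mathbf{b},\mathbf{c}\in\mathbb{R}^{LN}$, $\mathbf{b}_i=(b_{L(i-1)+1},\dots,b_{Li})^\top$, $\mathbf{c}_i$ analogously, $\mathbf{v}_{\varrho,i}=\mathbf{c}_i+\varrho\mathbf{b}_i$, $\mathbf{S}_i(\mathbf{b}_i,\mathbf{c}_i)=\max\{\sigma_i,|\mathbf{v}_{\varrho,i}|\}\mathbf{c}_i-\sigma_i\mathbf{v}_{\varrho,i}$. $\mathbf{F}(\mathbf{a},\mathbf{b},\mathbf{c})=(\mathbf{A}\mathbf{a}+\mathbf{B}\mathbf{b}+\mathbf{l},\ \mathbf{B}^\top\mathbf{a}+\mathbf{C}\mathbf{b}+\mathbf{D}\mathbf{c},\ \mathbf{S}_1(\mathbf{b}_1,\mathbf{c}_1),\dots,\mathbf{S}_N(\mathbf{b}_N,\mathbf{c}_N))$; the equation $\mathbf{F}=\mathbf{0}$ has a unique solution (it is the algebraic form of the discrete mixed elastoplasticity problem). $\partial\mathbf{F}$ is the Clarke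 subdifferential; $\mathbf{x}\otimes\mathbf{y}=\mathbf{x}\mathbf{y}^\top$. A pair $(\mathbf{F},\mathbf{G})$ of real symmetric $L\times L$ matrices is eigencomplementary if $\mathbf{F}$ is negative semi-definite, $\mathbf{G}$ positive semi-definite, they share a basis of eigenvectors of $\mathbb{R}^L$, and, if both are singular, additionally $\bigoplus_{\xi\in\sigma(\mathbf{F}),\xi<0}\operatorname{Eig}_{\mathbf{F}}(\xi)=\operatorname{Eig}_{\mathbf{G}}(0)$. *)

From mathcomp Require Import all_boot all_order all_algebra.
From mathcomp Require Import reals.
From mathcomp Require Import zify.
Set Implicit Arguments. Unset Strict Implicit. Unset Printing Implicit Defensive.
Import Order.TTheory GRing.Theory Num.Theory.
Local Open Scope ring_scope.

(* L = (d-1)(d+2)/2, dimension of symmetric trace-free d x d matrices *)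
Definition Ldim (d : nat) : nat := (((d - 1) * (d + 2)) %/ 2)%N.

(* flattening convention: block i (0-based), component j (0-based) of a
   vector of R^{N L} sits at position i*L + j  (paper: L(i-1)+k) *)
Lemma idx_proof (N L : nat) (i : 'I_N) (j : 'I_L) : (i * L + j < N * L)%N.
Proof.
case: i j => i Hi [j Hj] /=.
have : (i.+1 * L <= N * L)%N by rewrite leq_mul2r Hi orbT.
rewrite mulSn; move: Hj; clear; lia.
Qed.

Definition idx (N L : nat) (i : 'I_N) (j : 'I_L) : 'I_(N * L) :=
  Ordinal (idx_proof i j).

Lemma blkidx_proof (N L : nat) (k : 'I_(N * L)) : (k %/ L < N)%N.
Proof.
case: k => k Hk /=.
case: L Hk => [|L] Hk; first by rewrite muln0 in Hk.
by rewrite ltn_divLR.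
Qed.

Definition blkidx (N L : nat) (k : 'I_(N * L)) : 'I_N := Ordinal (blkidx_proof k).

Definition blk {R : ringType} (N L : nat) (b : 'cV[R]_(N * L)) (i : 'I_N) : 'cV[R]_L :=
  \col_j b (idx i j) 0.

Definition Dmat {R : ringType} (N L : nat) (Dv : 'I_N -> R) : 'M[R]_(N * L) :=
  \matrix_(k, k') (if k == k' then Dv (blkidx k) else 0).

Definition vnorm {R : realType} (L : nat) (x : 'cV[R]_L) : R :=
  Num.sqrt (\sum_j x j 0 ^+ 2).

Definition otimes {R : ringType} (L : nat) (x y : 'cV[R]_L) : 'M[R]_L := x *m y^T.

Definition vrho {R : realType} (N L : nat) (rho : R) (b c : 'cV[R]_(N * L)) (i : 'I_N)
  : 'cV[R]_L := blk c i + rho *: blk b i.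

Definition Sfun {R : realType} (N L : nat) (rho : R) (sig : 'I_N -> R)
  (b c : 'cV[R]_(N * L)) (i : 'I_N) : 'cV[R]_L :=
  Num.max (sig i) (vnorm (vrho rho b c i)) *: blk c i - sig i *: vrho rho b c i.

Definition Xblk {R : realType} (N L : nat) (rho : R) (sig tau : 'I_N -> R)
  (b c : 'cV[R]_(N * L)) (i : 'I_N) : 'M[R]_L :=
  let v := vrho rho b c i in
  (tau i * rho) *: otimes (blk c i) ((vnorm v)^-1 *: v) - (rho * sig i)%:M.

Definition Yblk {R : realType} (N L : nat) (rho : R) (sig tau : 'I_N -> R)
  (b c : 'cV[R]_(N * L)) (i : 'I_N) : 'M[R]_L :=
  let v := vrho rho b c i in
  tau i *: (otimes (blk c i) ((vnorm v)^-1 *: v) + (vnorm v - sig i)%:M).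

Definition eigencomplementary {R : realType} (L : nat) (F G : 'M[R]_L) : Prop :=
  [/\ F^T = F /\ G^T = G,
   (forall x : 'cV[R]_L, (x^T *m F *m x) 0 0 <= 0),
   (forall x : 'cV[R]_L, 0 <= (x^T *m G *m x) 0 0),
   (exists P : 'M[R]_L, P \in unitmx /\
      forall j : 'I_L, exists xi mu : R,
        F *m col j P = xi *: col j P /\ G *m col j P = mu *: col j P)
  & (* if both singular: sum of eigenspaces of F for negative eigenvalues
       equals the kernel Eig_G(0) *)
    (\det F = 0 -> \det G = 0 ->
      forall x : 'cV[R]_L,
        (exists (xi : 'I_L -> R) (y : 'I_L -> 'cV[R]_L),
            (forall k, xi k < 0 /\ F *m y k = xi k *: y k) /\ x = \sum_k y k)
        <-> G *m x = 0)].

From mathcomp Require Import all_boot all_order all_algebra.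
From mathcomp Require Import reals ring lra.
Set Implicit Arguments. Unset Strict Implicit. Unset Printing Implicit Defensive.
Import Order.TTheory GRing.Theory Num.Theory.
Local Open Scope ring_scope.

(* If |v_i| < sigma_i then tau_i = 0, X_i = -rho sigma_i I and Y_i = 0.  Otherwise
   S_i = 0 forces c_i = sigma_i u with u = v_i / |v_i|, so that X_i and Y_i are both of
   the form a Q + b I for the rank-one orthogonal projector Q = u u^T.  Such matrices are
   symmetric, are diagonalised simultaneously by an orthonormal basis starting with u
   (the image of e_1 under a Householder reflection), and have eigenvalue a + b on u and
   b on u^perp; the definiteness conditions then follow from 0 <= tau_i <= 1.  Both
   matrices are singular only when tau_i = 1 and |v_i| = sigma_i, where
   X_i = rho sigma_i (Q - I) and Y_i = sigma_i Q: the negative eigenspace of X_i and the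
   kernel of Y_i are then both u^perp. *)

Section RealMatrices.
Variable R : realType.

Lemma dotmxC n (x y : 'cV[R]_n) : x^T *m y = y^T *m x.
Proof. by rewrite [LHS]mx11_scalar -tr_scalar_mx -mx11_scalar trmx_mul trmxK. Qed.

Lemma dotmx_ge0 n (x : 'cV[R]_n) : 0 <= (x^T *m x) 0 0.
Proof. by rewrite mxE; apply: sumr_ge0 => j _; rewrite mxE -expr2 sqr_ge0. Qed.

Lemma dotmx_eq0 n (x : 'cV[R]_n) : (x^T *m x) 0 0 = 0 -> x = 0.
Proof.
rewrite mxE => /psumr_eq0P sq_eq0; apply/matrixP => i j; rewrite ord1 mxE.
have /eqP : x^T 0 i * x i 0 = 0 by apply: sq_eq0 => // k _; rewrite mxE -expr2 sqr_ge0.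
by rewrite mxE -expr2 sqrf_eq0 => /eqP.
Qed.

Lemma unitmx_idem_scale_add n (Q : 'M[R]_n) (a b : R) :
  Q *m Q = Q -> b != 0 -> a + b != 0 -> a *: Q + b%:M \in unitmx.
Proof.
move=> QQ b0 ab0.
have AB1 : (a *: Q + b%:M) *m ((- a / (b * (a + b))) *: Q + b^-1%:M) = 1%:M.
  rewrite mulmxDl !mulmxDr -scalar_mxM -!scalemxAl -!scalemxAr QQ.
  rewrite mul_mx_scalar mul_scalar_mx !scalerA addrA -!scalerDl divff //.
  have -> : a * (- a / (b * (a + b))) + a / b + - a / (b * (a + b)) * b = 0.
    by field; apply/andP.
  by rewrite scale0r add0r.
by have [] := mulmx1_unit AB1.
Qed.

Lemma delta_unit n : (delta_mx 0 0 : 'cV[R]_n.+1)^T *m delta_mx 0 0 = 1%:M.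
Proof. by rewrite trmx_delta mul_delta_mx; apply/matrixP => i j; rewrite !ord1 !mxE. Qed.

Definition householder n (w : 'cV[R]_n) : 'M[R]_n :=
  1%:M - (2 / (w^T *m w) 0 0) *: (w *m w^T).

Lemma householder_orthogonal n (w : 'cV[R]_n) :
  w != 0 -> (householder w)^T *m householder w = 1%:M.
Proof.
move=> w0; have ww0 : (w^T *m w) 0 0 != 0 by apply: contra w0 => /eqP/dotmx_eq0 ->.
have HT : (householder w)^T = householder w.
  by rewrite /householder linearB /= linearZ /= trmx_mul trmxK trmx1.
set k := 2 / (w^T *m w) 0 0; set W := w *m w^T.
have WW : W *m W = (w^T *m w) 0 0 *: W.
  by rewrite /W mulmxA -(mulmxA w) {1}[w^T *m w]mx11_scalar mul_mx_scalar scalemxAl.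
rewrite HT /householder -/k -/W mulmxBl !mulmxBr !mul1mx mulmx1 -!scalemxAr -!scalemxAl WW.
rewrite !scalerA -scalerBl -addrA -opprD -scalerDl.
have -> : k + (k - k * k * (w^T *m w) 0 0) = 0 by rewrite /k; field.
by rewrite scale0r subr0.
Qed.

Lemma householder_swap n (u v : 'cV[R]_n) :
  u^T *m u = 1%:M -> v^T *m v = 1%:M -> u != v -> householder (u - v) *m u = v.
Proof.
move=> uu vv uv; set w := u - v.
have wT : w^T = u^T - v^T by rewrite /w linearB.
have ww : (w^T *m w) 0 0 = 2 * (1 - (v^T *m u) 0 0).
  rewrite wT /w mulmxBl !mulmxBr uu vv (dotmxC u v) !mxE /=; ring.
have wu : w^T *m u = (1 - (v^T *m u) 0 0)%:M.
  by rewrite wT mulmxBl uu raddfB /= -mx11_scalar.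
have uv0 : 1 - (v^T *m u) 0 0 != 0.
  have : w != 0 by rewrite subr_eq0.
  by apply: contra => /eqP vu; apply/eqP/dotmx_eq0; rewrite ww vu mulr0.
rewrite /householder mulmxBl mul1mx -scalemxAl -mulmxA wu mul_mx_scalar scalerA ww.
have -> : 2 / (2 * (1 - (v^T *m u) 0 0)) * (1 - (v^T *m u) 0 0) = 1 by field.
by rewrite scale1r /w opprB addrC subrK.
Qed.

Lemma orthonormal_completion n (u : 'cV[R]_n.+1) :
  u^T *m u = 1%:M -> exists P : 'M[R]_n.+1, P^T *m P = 1%:M /\ col 0 P = u.
Proof.
move=> uu; set e : 'cV[R]_n.+1 := delta_mx 0 0.
have [<-|eu] := eqVneq e u.
  by exists 1%:M; rewrite trmx1 mulmx1 colE mul1mx.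
exists (householder (e - u)); split.
  by apply: householder_orthogonal; rewrite subr_eq0.
by rewrite colE householder_swap ?delta_unit.
Qed.

End RealMatrices.

Section UnitVectorProjector.
Variables (R : realType) (n : nat) (u : 'cV[R]_n.+1).
Hypothesis u_unit : u^T *m u = 1%:M.
Local Notation Q := (u *m u^T).

Lemma unit_projK : Q *m Q = Q.
Proof. by rewrite -mulmxA (mulmxA u^T) u_unit mul1mx. Qed.

Lemma unit_bessel (x : 'cV[R]_n.+1) : ((u^T *m x) 0 0) ^+ 2 <= (x^T *m x) 0 0.
Proof.
set w := (u^T *m x) 0 0.
have ux : u^T *m x = w%:M by apply: mx11_scalar.
have := dotmx_ge0 (x - w *: u).
rewrite [(x - _)^T]linearB /= [(w *: u)^T]linearZ /= mulmxBl !mulmxBr.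
rewrite -!scalemxAl -!scalemxAr u_unit (dotmxC x u) ux.
by move: (x^T *m x) => A; rewrite !mxE /= mulr1n; lra.
Qed.

Lemma scale_proj_add_form (a b : R) (x : 'cV[R]_n.+1) :
  (x^T *m (a *: Q + b%:M) *m x) 0 0 = a * ((u^T *m x) 0 0) ^+ 2 + b * (x^T *m x) 0 0.
Proof.
set w := (u^T *m x) 0 0.
have ux : u^T *m x = w%:M by apply: mx11_scalar.
rewrite mulmxDr mulmxDl -scalemxAr -scalemxAl mul_mx_scalar -scalemxAl !mulmxA.
rewrite -(mulmxA (x^T *m u)) (dotmxC x u) ux -scalar_mxM.
by move: (x^T *m x) => A; rewrite !mxE /= !mulr1n expr2.
Qed.

Lemma scale_proj_add_form_ge0 (a b : R) (x : 'cV[R]_n.+1) :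
  0 <= b -> 0 <= a + b -> 0 <= (x^T *m (a *: Q + b%:M) *m x) 0 0.
Proof.
rewrite scale_proj_add_form => b_ge0 ab_ge0.
have := unit_bessel x; have := sqr_ge0 ((u^T *m x) 0 0); nra.
Qed.

Lemma scale_proj_add_form_le0 (a b : R) (x : 'cV[R]_n.+1) :
  b <= 0 -> a + b <= 0 -> (x^T *m (a *: Q + b%:M) *m x) 0 0 <= 0.
Proof.
rewrite scale_proj_add_form => b_le0 ab_le0.
have := unit_bessel x; have := sqr_ge0 ((u^T *m x) 0 0); nra.
Qed.

Lemma scale_proj_add_tr (a b : R) : (a *: Q + b%:M)^T = a *: Q + b%:M.
Proof. by rewrite linearD /= linearZ /= trmx_mul trmxK tr_scalar_mx. Qed.

Lemma unit_proj_eigenbasis :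
  exists2 P : 'M[R]_n.+1, P \in unitmx & forall j, Q *m col j P = (j == 0)%:R *: col j P.
Proof.
have [P [PtP Pu]] := orthonormal_completion u_unit.
exists P => [|j]; first by have [] := mulmx1_unit PtP.
have uP : u^T *m col j P = ((j == 0)%:R)%:M.
  rewrite -Pu tr_col -row_mul !colE mulmxA PtP mul1mx.
  by apply/matrixP => i k; rewrite !ord1 !mxE eqxx andbT mulr1n eq_sym.
rewrite -mulmxA uP mul_mx_scalar.
by case: eqVneq => [->|_]; rewrite ?scale0r ?scale1r.
Qed.

Lemma scale_proj_mulmx_eq0 (c : R) (x : 'cV[R]_n.+1) :
  c != 0 -> ((c *: Q) *m x == 0) = (u^T *m x == 0).
Proof.
move=> c0; apply/idP/idP => [/eqP cQx|/eqP ux]; last first.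
  by rewrite -scalemxAl -mulmxA ux mulmx0 scaler0.
have := congr1 (mulmx u^T) cQx.
rewrite mulmx0 -scalemxAl -scalemxAr !mulmxA u_unit mul1mx => /eqP.
by rewrite scaler_eq0 (negbTE c0).
Qed.

Lemma neg_eigensum_unit_proj (a c : R) (x : 'cV[R]_n.+1) : 0 < a -> 0 < c ->
  (exists (xi : 'I_n.+1 -> R) (y : 'I_n.+1 -> 'cV[R]_n.+1),
     (forall k, xi k < 0 /\ (a *: Q - a%:M) *m y k = xi k *: y k) /\ x = \sum_k y k)
  <-> (c *: Q) *m x = 0.
Proof.
move=> a_gt0 c_gt0.
have -> : (c *: Q) *m x = 0 <-> u^T *m x = 0.
  by rewrite (rwP eqP) [in X in _ <-> X](rwP eqP) scale_proj_mulmx_eq0 ?gt_eqF.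
have uF : u^T *m (a *: Q - a%:M) = 0.
  by rewrite mulmxBr -scalemxAr mulmxA u_unit mul1mx mul_mx_scalar subrr.
split=> [[xi [y [eig ->]]]|ux].
  rewrite mulmx_sumr big1 // => k _; have [xi_lt0 Fy] := eig k.
  have := congr1 (mulmx u^T) Fy.
  rewrite mulmxA uF mul0mx -scalemxAr => /esym/eqP.
  by rewrite scaler_eq0 lt_eqF //= => /eqP.
exists (fun=> - a), (fun k => if k == 0 then x else 0); split.
  move=> k; split; first by rewrite oppr_lt0.
  case: eqP => _; last by rewrite mulmx0 scaler0.
  by rewrite mulmxBl -scalemxAl -mulmxA ux mulmx0 scaler0 mul_scalar_mx sub0r scaleNr.
by rewrite (bigD1 0) //= big1 ?addr0 // => k /negbTE ->.
Qed.

Lemma eigencomplementary_scale_proj (a b c d : R) :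
  b < 0 -> a + b <= 0 -> 0 <= d -> 0 <= c + d -> (a + b = 0 -> 0 < c + d) ->
  eigencomplementary (a *: Q + b%:M) (c *: Q + d%:M).
Proof.
move=> b_lt0 ab_le0 d_ge0 cd_ge0 cd_gt0; split.
- by rewrite !scale_proj_add_tr.
- by move=> x; apply: scale_proj_add_form_le0 => //; apply: ltW.
- by move=> x; apply: scale_proj_add_form_ge0.
- have [P P_unit QP] := unit_proj_eigenbasis.
  exists P; split => // j; exists (a * (j == 0)%:R + b), (c * (j == 0)%:R + d).
  by split; rewrite mulmxDl -scalemxAl QP mul_scalar_mx scalerA -scalerDl.
move=> detF detG x.
have singular a' b' : \det (a' *: Q + b'%:M) = 0 -> b' != 0 -> a' + b' = 0.
  move=> det0 b'0.
  have : a' *: Q + b'%:M \notin unitmx by rewrite unitmxE unitfE det0 eqxx.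
  by apply: contraNeq => ab'0; apply: unitmx_idem_scale_add; rewrite ?unit_projK.
have ab0 := singular _ _ detF (ltr0_neq0 b_lt0).
have d0 : d = 0.
  by apply: contraTeq (cd_gt0 ab0) => d0; rewrite (singular _ _ detG d0) ltxx.
have -> : b = - a by lra.
by rewrite d0 raddf0 addr0 raddfN; apply: neg_eigensum_unit_proj; lra.
Qed.

End UnitVectorProjector.

Section PlasticBlocks.
Variable R : realType.

Lemma vnorm_dotmx L (v : 'cV[R]_L) : (v^T *m v) 0 0 = vnorm v ^+ 2.
Proof.
rewrite sqr_sqrtr; last by apply: sumr_ge0 => j _; rewrite sqr_ge0.
by rewrite mxE; apply: eq_bigr => j _; rewrite mxE expr2.
Qed.

Lemma normalize_unit L (v : 'cV[R]_L) : 0 < vnorm v ->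
  ((vnorm v)^-1 *: v)^T *m ((vnorm v)^-1 *: v) = 1%:M.
Proof.
move=> v_gt0; rewrite linearZ /= [(_ *: v)^T]linearZ /= -scalemxAl scalerA.
rewrite [v^T *m v]mx11_scalar vnorm_dotmx scale_scalar_mx.
by congr (_%:M); field; rewrite gt_eqF.
Qed.

Lemma Sfun_eq0_yield L N (rho : R) (sig : 'I_N -> R) (b c : 'cV[R]_(N * L)) i :
  let v := vrho rho b c i in
  0 < sig i -> sig i <= vnorm v -> Sfun rho sig b c i = 0 ->
  blk c i = sig i *: ((vnorm v)^-1 *: v).
Proof.
move=> v s_gt0 s_le; rewrite /Sfun -/v max_r // => /eqP; rewrite subr_eq0 => /eqP S0.
rewrite scalerA mulrC -scalerA -S0 scalerA mulVf ?scale1r // gt_eqF //.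
exact: lt_le_trans s_le.
Qed.

Lemma eigencomplementary_blk L N (rho : R) (sig tau : 'I_N -> R)
    (b c : 'cV[R]_(N * L.+1)) i :
  let v := vrho rho b c i in
  0 < rho -> 0 < sig i -> Sfun rho sig b c i = 0 -> 0 <= tau i <= 1 ->
  (vnorm v < sig i -> tau i = 0) ->
  eigencomplementary (Xblk rho sig tau b c i) (Yblk rho sig tau b c i).
Proof.
move=> v rho_gt0 s_gt0 S0 /andP[t_ge0 t_le1] elastic.
have rs_gt0 : 0 < rho * sig i by apply: mulr_gt0.
rewrite /Xblk /Yblk -/v /otimes.
have [v_lt|v_ge] := ltP (vnorm v) (sig i).
  rewrite elastic // mul0r !scale0r sub0r -raddfN.
  (* the projector term vanishes, so any unit vector serves *)
  have := eigencomplementary_scale_proj (delta_unit R L)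
    (a := 0) (b := - (rho * sig i)) (c := 0) (d := 0).
  rewrite !scale0r !add0r raddf0; apply; lra.
rewrite (Sfun_eq0_yield s_gt0 v_ge S0); set u := (vnorm v)^-1 *: v.
rewrite -scalemxAl scalerA [tau i *: _]scalerDr scalerA scale_scalar_mx -raddfN.
apply: eigencomplementary_scale_proj; first exact: normalize_unit (lt_le_trans s_gt0 v_ge).
- by rewrite oppr_lt0.
- nra.
- nra.
- nra.
- rewrite -mulrA -{2}[rho * sig i]mul1r -mulrBl => /eqP.
  by rewrite mulf_eq0 (gt_eqF rs_gt0) orbF subr_eq0 => /eqP ->; lra.
Qed.

End PlasticBlocks.

Theorem lemma4p2 (R : realType) (d M N : nat) (hd : d = 2%N \/ d = 3%N)
  (rho : R) (hrho : 0 < rho)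
  (sig : 'I_N -> R) (hsig : forall i, 0 < sig i)
  (Dv : 'I_N -> R) (hD : forall i, 0 < Dv i)
  (A : 'M[R]_(d * M)) (B : 'M[R]_(d * M, N * Ldim d)) (C : 'M[R]_(N * Ldim d))
  (l : 'cV[R]_(d * M))
  (a : 'cV[R]_(d * M)) (b c : 'cV[R]_(N * Ldim d))
  (hF1 : A *m a + B *m b + l = 0)
  (hF2 : B^T *m a + C *m b + @Dmat R N (Ldim d) Dv *m c = 0)
  (hF3 : forall i, Sfun rho sig b c i = 0)
  (tau : 'I_N -> R) (htau : forall i, 0 <= tau i <= 1)
  (htau0 : forall i, vnorm (vrho rho b c i) < sig i -> tau i = 0)
  (htau1 : forall i, vnorm (vrho rho b c i) > sig i -> tau i = 1) :
  forall i : 'I_N,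
    eigencomplementary (Xblk rho sig tau b c i) (Yblk rho sig tau b c i).
Proof.
move=> i; case: hd => hd; subst d;
  exact: eigencomplementary_blk hrho (hsig i) (hF3 i) (htau i) (htau0 i).
Qed.
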